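(* For every $\alpha \in (1/3, 1/2)$ there exists $\beta>0$ such that the following holds for all sufficiently large $n$: every $n$-vertex graph $G$ with at least $\lfloor n^2/4\rfloor+1$ edges and $b(G)<\alpha n/2$ has at least $\beta n^3$ triangles.
   Context: Graphs are finite and simple. A book of size $b$ in a graph is an edge that lies in $b$ triangles; $b(G)$ denotes the maximum size of a book in $G$, i.e. the maximum, over all edges $e$ of $G$, of the number of triangles of $G$ containing $e$. *)

From mathcomp Require Import all_boot all_order all_algebra.
Set Implicit Arguments. Unset Strict Implicit. Unset Printing Implicit Defensive.

Definition simple_graph (n : nat) (e : rel 'I_n) : Prop :=
  (forall x y, e x y = e y x) /\ (forall x, ~~ e x x).

Definition num_edges (n : nat) (e : rel 'I_n) : nat :=
  #|[set p : 'I_n * 'I_n | (p.1 < p.2)%N && e p.1 p.2]|.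

Definition num_triangles (n : nat) (e : rel 'I_n) : nat :=
  #|[set t : 'I_n * 'I_n * 'I_n |
      [&& (t.1.1 < t.1.2)%N, (t.1.2 < t.2)%N,
          e t.1.1 t.1.2, e t.1.2 t.2 & e t.1.1 t.2]]|.

Definition book_size (n : nat) (e : rel 'I_n) (x y : 'I_n) : nat :=
  #|[set w : 'I_n | e x w && e y w]|.

(* b(G): maximum book size over all edges (0 if there are no edges) *)
Definition max_book (n : nat) (e : rel 'I_n) : nat :=
  \max_(p : 'I_n * 'I_n | e p.1 p.2) book_size e p.1 p.2.

From mathcomp Require Import all_boot all_order all_algebra.
From mathcomp Require Import zify reals ring lra.
Import Order.TTheory GRing.Theory Num.Theory.
Set Implicit Arguments. Unset Strict Implicit. Unset Printing Implicit Defensive.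

(* Let f be a maximum cut of G and d = 1/2 - alpha.  Averaging the cuts induced by the
   neighbourhoods of the vertices and applying Cauchy-Schwarz to the degrees shows that,
   when G has fewer than beta n^3 triangles, the maximum cut is nearly n^2/4; hence both
   sides have about n/2 vertices and only O(beta n^2) cross pairs are non-adjacent.  Call
   a vertex heavy if it misses at least d n/4 vertices of the other side.  Two light
   adjacent vertices on the same side would span a book larger than alpha n/2, so every
   inner edge meets a heavy vertex; and a heavy vertex with a light neighbour on its own
   side has small cross degree (bounded through the book on that edge), hence, by
   maximality of the cut, few inner neighbours.  Since G has more than n^2/4 edges, the
   inner edges outnumber the missing cross pairs, which forces many heavy vertices, each
   carrying d n/4 missing cross pairs: this contradicts the O(beta n^2) bound. *)

Lemma card_sum (T : finType) (P : pred T) : #|P| = \sum_x (P x : nat).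
Proof.
by rewrite -sum1_card big_mkcond; apply: eq_bigr => x _; rewrite unfold_in; case: (P x).
Qed.

Lemma mul2_le_sqr_add (a b : nat) : 2 * (a * b) <= a * a + b * b.
Proof. have [h _] := nat_AGM2 a b; move: h; rewrite sqrnD; lia. Qed.

Section Graph.
Variables (n : nat) (e : rel 'I_n).
Hypothesis e_sym : forall x y, e x y = e y x.
Hypothesis e_irr : forall x, ~~ e x x.
Local Notation bipartition := {ffun 'I_n -> bool}.

Lemma sum_const_ord (k : nat) : \sum_(i : 'I_n) k = n * k.
Proof. by rewrite sum_nat_const card_ord. Qed.

Definition deg u := \sum_w (e u w : nat).
Definition deg_sum := \sum_u deg u.

Lemma num_edges_double_le : 2 * num_edges e <= deg_sum.
Proof.
rewrite /num_edges cardsE card_sum.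
rewrite -(pair_big xpredT xpredT (fun a b : 'I_n => ((a < b) && e a b : nat))) mul2n -addnn.
rewrite {2}exchange_big -big_split /=; apply: leq_sum => u _.
rewrite -big_split /=; apply: leq_sum => w _; rewrite [e w u]e_sym.
by case: (e u w); case: ltngtP.
Qed.

Lemma deg_sum_le : deg_sum <= n * n.
Proof.
rewrite -sum_const_ord; apply: leq_sum => u _.
by rewrite -[n]muln1 -sum_const_ord; apply: leq_sum => w _; case: (e u w).
Qed.

Lemma deg_sum_sq_le : deg_sum * deg_sum <= n * \sum_u deg u * deg u.
Proof.
rewrite -(leq_pmul2l (isT : 0 < 2)).
have -> : 2 * (n * \sum_u deg u * deg u) = \sum_u \sum_w (deg u * deg u + deg w * deg w).
  rewrite [RHS](eq_bigr (fun u => n * (deg u * deg u) + \sum_w deg w * deg w)); last first.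
    by move=> u _; rewrite big_split /= sum_const_ord.
  by rewrite big_split /= sum_const_ord -big_distrr /=; lia.
rewrite /deg_sum big_distrl big_distrr /=; apply: leq_sum => u _.
rewrite big_distrr big_distrr /=; apply: leq_sum => w _; exact: mul2_le_sqr_add.
Qed.

Definition ordered_triangles := \sum_u \sum_v \sum_w (e u v && e v w && e u w : nat).

Lemma ordered_triangles_le : ordered_triangles <= 6 * num_triangles e.
Proof.
pose inc (u v w : 'I_n) := [&& (u < v)%N, (v < w)%N, e u v, e v w & e u w].
have triE : num_triangles e = \sum_u \sum_v \sum_w (inc u v w : nat).
  rewrite /num_triangles cardsE card_sum.
  rewrite -(pair_big xpredT xpredT (fun (p : 'I_n * 'I_n) w => (inc p.1 p.2 w : nat))).
  by rewrite -(pair_big xpredT xpredT (fun a b : 'I_n => \sum_w (inc a b w : nat))).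
have sort3 u v w : (e u v && e v w && e u w : nat) <=
    inc u v w + inc u w v + inc v u w + inc v w u + inc w u v + inc w v u.
  rewrite /inc; case euv: (e u v); case evw: (e v w); case euw: (e u w) => //=.
  have neq x y : e x y -> (x : nat) != y.
    by move=> exy; apply: contraTneq exy => /val_inj ->; exact: e_irr.
  move: (neq _ _ euv) (neq _ _ evw) (neq _ _ euw).
  rewrite [e v u]e_sym [e w v]e_sym [e w u]e_sym euv evw euw /=.
  by case: (ltngtP u v); case: (ltngtP v w); case: (ltngtP u w) => //=; lia.
set T := \sum_u \sum_v \sum_w (inc u v w : nat).
have p132 : \sum_u \sum_v \sum_w (inc u w v : nat) = T.
  by apply: eq_bigr => u _; rewrite exchange_big.
have p213 : \sum_u \sum_v \sum_w (inc v u w : nat) = T by rewrite exchange_big.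
have p231 : \sum_u \sum_v \sum_w (inc v w u : nat) = T.
  by rewrite exchange_big; apply: eq_bigr => v _; rewrite exchange_big.
have p312 : \sum_u \sum_v \sum_w (inc w u v : nat) = T.
  by under eq_bigr => u _ do rewrite exchange_big; rewrite exchange_big.
have p321 : \sum_u \sum_v \sum_w (inc w v u : nat) = T.
  by rewrite exchange_big; under eq_bigr => v _ do rewrite exchange_big; rewrite exchange_big.
apply: (@leq_trans (\sum_u \sum_v \sum_w
    (inc u v w + inc u w v + inc v u w + inc v w u + inc w u v + inc w v u))).
  by do 3 (apply: leq_sum => ? _); exact: sort3.
under eq_bigr => u _ do under eq_bigr => v _ do rewrite !big_split.
under eq_bigr => u _ do rewrite !big_split.
by rewrite !big_split /= p132 p213 p231 p312 p321 -/T triE; lia.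
Qed.

(* Bipartitions are colourings [f : 'I_n -> bool]; [cut f] counts every crossing edge twice. *)
Definition cross_deg (f : bipartition) u := \sum_w (e u w && (f u != f w) : nat).
Definition inner_deg (f : bipartition) u := \sum_w (e u w && (f u == f w) : nat).
Definition cross_nonadj (f : bipartition) u := \sum_w (~~ e u w && (f u != f w) : nat).
Definition opposite_size (f : bipartition) u := \sum_w (f u != f w : nat).
Definition cut f := \sum_u cross_deg f u.

Lemma deg_sum_split f : deg_sum = cut f + \sum_u inner_deg f u.
Proof.
rewrite /deg_sum /cut -big_split; apply: eq_bigr => u _.
by rewrite /deg -big_split; apply: eq_bigr => w _; case: (e u w); case: (f u == f w).
Qed.

Lemma opposite_size_split f u : opposite_size f u = cross_deg f u + cross_nonadj f u.
Proof. by rewrite -big_split; apply: eq_bigr => w _; case: (e u w); case: (f u != f w). Qed.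

Lemma sum_opposite_size_split f :
  \sum_u opposite_size f u = cut f + \sum_u cross_nonadj f u.
Proof. by rewrite /cut -big_split; apply: eq_bigr => u _; rewrite opposite_size_split. Qed.

Definition nbhd_cut v : bipartition := [ffun w => e v w].

Lemma sum_cut_nbhd :
  \sum_v cut (nbhd_cut v) + 2 * ordered_triangles = 2 * \sum_u deg u * deg u.
Proof.
have cutE v : cut (nbhd_cut v) = 2 * \sum_u \sum_w (e v u && e u w && ~~ e v w : nat).
  rewrite /cut /cross_deg mul2n -addnn [X in _ = _ + X]exchange_big -big_split.
  apply: eq_bigr => u _; rewrite -big_split; apply: eq_bigr => w _.
  by rewrite !ffunE [e w u]e_sym; case: (e v u); case: (e v w); case: (e u w).
have sqE : \sum_u deg u * deg u = \sum_v \sum_u \sum_w (e v u && e u w : nat).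
  rewrite exchange_big; apply: eq_bigr => u _.
  rewrite (eq_bigr (fun v => (e v u : nat) * deg u)); last first.
    move=> v _; rewrite /deg big_distrr /=; apply: eq_bigr => w _.
    by case: (e v u); case: (e u w).
  by rewrite -big_distrl /=; congr (_ * _); apply: eq_bigr => v _; rewrite e_sym.
rewrite sqE (eq_bigr _ (fun v _ => cutE v)) -big_distrr -mulnDr; congr (_ * _).
rewrite -big_split; apply: eq_bigr => v _; rewrite -big_split; apply: eq_bigr => u _.
rewrite -big_split; apply: eq_bigr => w _.
by case: (e v u); case: (e v w); case: (e u w).
Qed.

Lemma cut_split_at f x : cut f = 2 * cross_deg f x +
  \sum_(u | u != x) \sum_(w | w != x) (e u w && (f u != f w) : nat).
Proof.
have col : \sum_(u | u != x) (e u x && (f u != f x) : nat) = cross_deg f x.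
  rewrite /cross_deg [RHS](bigD1 x) //= (negbTE (e_irr x)) add0n.
  by apply: eq_bigr => u _; rewrite e_sym eq_sym.
rewrite /cut (bigD1 x) //= (eq_bigr (fun u => (e u x && (f u != f x) : nat) +
  \sum_(w | w != x) (e u w && (f u != f w) : nat))); last first.
  by move=> u _; rewrite /cross_deg (bigD1 x).
by rewrite big_split /= col; lia.
Qed.

Definition switch (f : bipartition) x : bipartition :=
  [ffun u => if u == x then ~~ f x else f u].

Lemma cut_switch f x : cut (switch f x) + 2 * cross_deg f x = cut f + 2 * inner_deg f x.
Proof.
have cross_switch : cross_deg (switch f x) x = inner_deg f x.
  apply: eq_bigr => w _; rewrite !ffunE eqxx.
  case: (eqVneq w x) => [-> | _]; first by rewrite (negbTE (e_irr x)).
  by case: (f x); case: (f w).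
have rest_switch : \sum_(u | u != x) \sum_(w | w != x)
      (e u w && (switch f x u != switch f x w) : nat) =
    \sum_(u | u != x) \sum_(w | w != x) (e u w && (f u != f w) : nat).
  by apply: eq_bigr => u hu; apply: eq_bigr => w hw; rewrite !ffunE (negbTE hu) (negbTE hw).
rewrite (cut_split_at (switch f x) x) (cut_split_at f x) cross_switch rest_switch; lia.
Qed.

Lemma max_cut_inner_le_cross f x :
  (forall g, cut g <= cut f) -> inner_deg f x <= cross_deg f x.
Proof. by move=> f_max; have := cut_switch f x; have := f_max (switch f x); lia. Qed.

Definition side_size (f : bipartition) b := \sum_w (f w == b : nat).

Lemma side_size_add f b : side_size f b + side_size f (~~ b) = n.
Proof.
rewrite -big_split /= (eq_bigr (fun _ => 1)); last by move=> w _; case: (f w); case: b.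
by rewrite sum_const_ord muln1.
Qed.

Lemma opposite_sizeE f u : opposite_size f u = side_size f (~~ f u).
Proof. by apply: eq_bigr => w _; case: (f u); case: (f w). Qed.

Lemma sum_opposite_size f :
  \sum_u opposite_size f u = 2 * (side_size f true * side_size f false).
Proof.
rewrite (eq_bigr (fun u => (f u : nat) * side_size f false + (~~ f u : nat) * side_size f true)).
  rewrite big_split /= -!big_distrl /=.
  have -> : \sum_u (f u : nat) = side_size f true by apply: eq_bigr => u _; case: (f u).
  have -> : \sum_u (~~ f u : nat) = side_size f false by apply: eq_bigr => u _; case: (f u).
  lia.
by move=> u _; rewrite opposite_sizeE; case: (f u); rewrite /= ?mul1n ?mul0n ?addn0.
Qed.

Lemma sum_opposite_size_le f : \sum_u opposite_size f u <= 2 * (n * n %/ 4).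
Proof.
rewrite sum_opposite_size leq_mul2l /= leq_divRL //.
have [+ _] := nat_AGM2 (side_size f true) (side_size f false).
by rewrite (side_size_add f true); lia.
Qed.

Lemma book_sizeE u w : book_size e u w = \sum_z (e u z && e w z : nat).
Proof. by rewrite /book_size cardsE card_sum. Qed.

Lemma book_size_le_max u w : e u w -> book_size e u w <= max_book e.
Proof.
by move=> euw; exact: (@leq_bigmax_cond _ (fun p : 'I_n * 'I_n => e p.1 p.2)
  (fun p => book_size e p.1 p.2) (u, w) euw).
Qed.

Lemma opposite_size_le_book (f : bipartition) u w : f u = f w ->
  opposite_size f u <= book_size e u w + cross_nonadj f u + cross_nonadj f w.
Proof.
move=> fuw; rewrite book_sizeE -!big_split /=; apply: leq_sum => z _.
by rewrite -fuw; case: (e u z); case: (e w z); case: (f u != f z).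
Qed.

Lemma cross_deg_le_book (f : bipartition) u w : f u = f w ->
  cross_deg f u <= book_size e u w + cross_nonadj f w.
Proof.
move=> fuw; rewrite book_sizeE -!big_split /=; apply: leq_sum => z _.
by rewrite -fuw; case: (e u z); case: (e w z); case: (f u != f z).
Qed.

Lemma sum_pair_pred (S : pred 'I_n) : \sum_u \sum_w (S u && S w : nat) = #|S| * #|S|.
Proof.
rewrite card_sum big_distrl /=; apply: eq_bigr => u _; rewrite big_distrr /=.
by apply: eq_bigr => w _; case: (S u); case: (S w).
Qed.

Lemma sum_inner_deg_le (S : pred 'I_n) (f : bipartition) :
  (forall u w, e u w -> f u = f w -> S u || S w) ->
  \sum_u inner_deg f u <= #|S| * #|S| +
    2 * \sum_u \sum_w (S u && ~~ S w && e u w && (f u == f w) : nat).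
Proof.
move=> hS; rewrite -sum_pair_pred mul2n -addnn.
rewrite [X in _ <= _ + (_ + X)]exchange_big -!big_split /=; apply: leq_sum => u _.
rewrite -!big_split /=; apply: leq_sum => w _.
rewrite [e w u]e_sym [f w == f u]eq_sym.
case euw: (e u w); case: eqP => //= fuw.
by move: (hS u w euw fuw); case: (S u); case: (S w).
Qed.

Lemma sum_cross_nonadj_in_le (S : pred 'I_n) (f : bipartition) :
  2 * \sum_(u in S) cross_nonadj f u <= \sum_u cross_nonadj f u + #|S| * #|S|.
Proof.
rewrite -sum_pair_pred mul2n -addnn.
have -> : \sum_(u in S) cross_nonadj f u =
    \sum_u \sum_w (S u && ~~ e u w && (f u != f w) : nat).
  rewrite big_mkcond; apply: eq_bigr => u _; rewrite unfold_in.
  by case: (S u); [rewrite /cross_nonadj | rewrite big1].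
rewrite [X in _ + X <= _]exchange_big /cross_nonadj -!big_split /=; apply: leq_sum => u _.
rewrite -!big_split /=; apply: leq_sum => w _.
rewrite [e w u]e_sym [f w == f u]eq_sym.
by case: (S u); case: (S w); case: (e u w); case: (f u != f w).
Qed.

Lemma sqr_le_deg_sum : (n * n %/ 4).+1 <= num_edges e -> n * n <= 2 * deg_sum.
Proof.
move=> edges; have := num_edges_double_le; have := divn_eq (n * n) 4.
have := ltn_pmod (n * n) (isT : 0 < 4); lia.
Qed.

Lemma sum_inner_deg_ge f : (n * n %/ 4).+1 <= num_edges e ->
  \sum_u cross_nonadj f u + 2 <= \sum_u inner_deg f u.
Proof.
move=> edges; have := num_edges_double_le; have := sum_opposite_size_le f.
by rewrite (deg_sum_split f) sum_opposite_size_split; lia.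
Qed.

Lemma cut_le_side_sizes f b : cut f <= 2 * (side_size f b * side_size f (~~ b)).
Proof.
have := sum_opposite_size f; rewrite sum_opposite_size_split.
by case: b => /=; rewrite ?[(side_size f false * _)%N]mulnC; lia.
Qed.

Lemma cut_add_cross_nonadj_le f : 2 * (cut f + \sum_u cross_nonadj f u) <= n * n.
Proof.
rewrite -sum_opposite_size_split sum_opposite_size.
have [+ _] := nat_AGM2 (side_size f true) (side_size f false).
by rewrite (side_size_add f true); lia.
Qed.

Section MaxCut.
Local Open Scope ring_scope.
Variables (R : realFieldType) (f : bipartition).
Hypothesis f_max : forall g, (cut g <= cut f)%N.

Section BookBound.
Variables (N c th eta : R).
Hypothesis opposite_large : forall u, (2^-1 - eta) * N <= (opposite_size f u)%:R.
Hypothesis book_small : (max_book e)%:R < c * N.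
Hypotheses (N_ge0 : 0 <= N) (c_ge0 : 0 <= c) (th_ge0 : 0 <= th).
Hypothesis c_th_eta : c + 2 * th <= 2^-1 - eta.

Definition heavy u := th * N <= (cross_nonadj f u)%:R.

Lemma inner_edge_heavy u w : e u w -> f u = f w -> heavy u || heavy w.
Proof.
move=> euw fuw; apply/negPn/negP; rewrite negb_or /heavy -!ltNge => /andP[lu lw].
have := opposite_size_le_book fuw; have := book_size_le_max euw.
rewrite -!(ler_nat R) !natrD => book_le opp_le.
by have := opposite_large u; have := ler_wpM2r N_ge0 c_th_eta; move: book_small; lra.
Qed.

Definition light_inner_deg u := (\sum_w (~~ heavy w && e u w && (f u == f w) : nat))%N.

(* A light inner neighbour w of u bounds cross_deg f u by the book on uw plus the
   cross non-neighbours of w, and the maximality of the cut bounds inner_deg f u by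
   cross_deg f u. *)
Lemma light_inner_deg_le u :
  (light_inner_deg u)%:R * (2^-1 - eta - c - th) <= (c + th) * (cross_nonadj f u)%:R.
Proof.
have D_ge0 : 0 <= 2^-1 - eta - c - th by move: c_th_eta th_ge0; lra.
have [/existsP [w /andP [/andP [lw euw] fuw]] | /existsPn none] :=
  boolP [exists w, ~~ heavy w && e u w && (f u == f w)]; last first.
  rewrite (_ : light_inner_deg u = 0%N) ?mul0r ?mulr_ge0 ?addr_ge0 //.
  by rewrite /light_inner_deg big1 // => w _; have := none w; case: (_ && _).
have X_le : (light_inner_deg u <= cross_deg f u)%N.
  apply: leq_trans (max_cut_inner_le_cross u f_max).
  by apply: leq_sum => z _; case: (heavy z); case: (e u z); case: (f u == f z).
have := cross_deg_le_book (eqP fuw); have := book_size_le_max euw.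
have := opposite_large u; move: X_le lw; rewrite /heavy -ltNge opposite_size_split.
rewrite -!(ler_nat R) !natrD => X_le lw opp book_le cross_le.
have X_small : (light_inner_deg u)%:R <= (c + th) * N by move: book_small; lra.
have u_heavy : (2^-1 - eta - c - th) * N <= (cross_nonadj f u)%:R by move: book_small; lra.
have := ler_wpM2r D_ge0 X_small; have := ler_wpM2l (addr_ge0 c_ge0 th_ge0) u_heavy.
lra.
Qed.

Lemma sum_heavy_light_inner_le :
  (\sum_u \sum_w (heavy u && ~~ heavy w && e u w && (f u == f w) : nat))%N%:R
    * (2^-1 - eta - c - th) <= (c + th) * (\sum_(u in heavy) cross_nonadj f u)%N%:R.
Proof.
have -> : (\sum_u \sum_w (heavy u && ~~ heavy w && e u w && (f u == f w) : nat) =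
    \sum_(u in heavy) light_inner_deg u)%N.
  rewrite [RHS]big_mkcond; apply: eq_bigr => u _.
  have -> : (u \in heavy) = heavy u by [].
  by case: (heavy u); [| rewrite big1].
rewrite !natr_sum big_distrl big_distrr /=.
by apply: ler_sum => u _; exact: light_inner_deg_le.
Qed.

Lemma heavy_card_sq_ge : ((n * n %/ 4).+1 <= num_edges e)%N ->
  (2^-1 - eta - c - th) * ((\sum_u cross_nonadj f u)%N%:R + 2)
    <= (2^-1 - eta) * #|heavy|%:R ^+ 2 + (c + th) * (\sum_u cross_nonadj f u)%N%:R.
Proof.
move=> edges; have D_ge0 : 0 <= 2^-1 - eta - c - th by move: c_th_eta th_ge0; lra.
have := sum_inner_deg_ge f edges; have := sum_inner_deg_le inner_edge_heavy.
have := sum_cross_nonadj_in_le heavy f; have := sum_heavy_light_inner_le.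
rewrite -!(ler_nat R) !natrD !natrM => XY Y_le I_le I_ge.
have := ler_wpM2l D_ge0 (le_trans I_ge I_le).
have := ler_wpM2l (addr_ge0 c_ge0 th_ge0) Y_le.
by rewrite expr2; lra.
Qed.

End BookBound.

Section FewTriangles.
Variable beta : R.
Hypothesis edges_large : ((n * n %/ 4).+1 <= num_edges e)%N.
Hypothesis triangles_few : (num_triangles e)%:R < beta * n%:R ^+ 3.
Local Notation N := (n%:R : R).

Lemma n_gt0 : (0 < n)%N.
Proof.
rewrite lt0n; apply/eqP => n0; have nn : (n * n = 0)%N by rewrite n0.
by move: edges_large (num_edges_double_le) deg_sum_le; rewrite nn; lia.
Qed.

Lemma max_cut_large : N * N / 2 - 12 * beta * (N * N) < (cut f)%:R.
Proof.
have sq := sqr_le_deg_sum edges_large; have cs := deg_sum_sq_le.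
have sum_sq : (2 * \sum_u deg u * deg u <= n * cut f + 12 * num_triangles e)%N.
  have avg : (\sum_v cut (nbhd_cut v) <= n * cut f)%N.
    by rewrite -sum_const_ord; apply: leq_sum => v _; exact: f_max.
  by have := sum_cut_nbhd; have := ordered_triangles_le; lia.
move: sq cs sum_sq; rewrite -!(ler_nat R) !natrD !natrM => sq cs sum_sq.
have N_gt0 : 0 < N by rewrite ltr0n n_gt0.
have s1 := ler_pM (mulr_ge0 (ler0n R n) (ler0n R n)) (mulr_ge0 (ler0n R n) (ler0n R n)) sq sq.
have s2 := ler_wpM2l (ler0n R n) sum_sq.
have s3 : N * (num_triangles e)%:R < N * (beta * N ^+ 3) by rewrite ltr_pM2l.
have : 0 < (N * N) * ((cut f)%:R - (N * N / 2 - 12 * beta * (N * N))).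
  by move: s1 s2 s3 cs; rewrite exprS expr2; lra.
by rewrite pmulr_rgt0 ?subr_gt0 ?mulr_gt0.
Qed.

Lemma cross_nonadj_sum_small : (\sum_u cross_nonadj f u)%N%:R < 12 * beta * (N * N).
Proof.
have := cut_add_cross_nonadj_le f; rewrite -(ler_nat R) !natrM natrD.
by have := max_cut_large; lra.
Qed.

Lemma side_size_large eta b : 0 <= eta -> 6 * beta <= eta ^+ 2 ->
  (2^-1 - eta) * N <= (side_size f b)%:R.
Proof.
move=> eta_ge0 beta_le; rewrite leNgt; apply/negP => small.
have N_gt0 : 0 < N by rewrite ltr0n n_gt0.
have sizes : (side_size f b)%:R + (side_size f (~~ b))%:R = N.
  by rewrite -natrD side_size_add.
have cut_le := cut_le_side_sizes f b; move: cut_le; rewrite -(ler_nat R) !natrM => cut_le.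
have cut_ge := max_cut_large.
move: sizes small cut_le cut_ge.
move: (side_size f b)%:R (side_size f (~~ b))%:R (cut f)%:R => k k' C sizes small cut_le cut_ge.
have gap_ge0 : 0 <= 2 * eta * N by rewrite !mulr_ge0 // ltW.
have gap : 2 * eta * N < k' - k by lra.
have := ler_pM gap_ge0 gap_ge0 (ltW gap) (ltW gap).
have := ler_wpM2r (mulr_ge0 (ltW N_gt0) (ltW N_gt0)) beta_le.
have -> : (k' - k) * (k' - k) = N * N - 4 * (k * k') by rewrite -sizes; ring.
lra.
Qed.

Lemma heavy_card_sq_le th : 0 <= th ->
  th ^+ 2 * #|heavy N th|%:R ^+ 2 <= 12 * beta * (\sum_u cross_nonadj f u)%N%:R.
Proof.
move=> th_ge0; have N_gt0 : 0 < N by rewrite ltr0n n_gt0.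
have Y_ge : #|heavy N th|%:R * (th * N) <= (\sum_(u in heavy N th) cross_nonadj f u)%N%:R.
  rewrite -sum1_card !natr_sum big_distrl /=.
  by apply: ler_sum => u; rewrite mul1r.
have Y_le : ((\sum_(u in heavy N th) cross_nonadj f u) <= \sum_u cross_nonadj f u)%N.
  by rewrite [X in (_ <= X)%N](bigID (mem (heavy N th))) /= leq_addr.
move: Y_le; rewrite -(ler_nat R) => Y_le.
have M_small := cross_nonadj_sum_small.
move: Y_ge Y_le M_small (ler0n R #|heavy N th|).
move: #|_|%:R (\sum_(_ in _) _)%N%:R (\sum_u _)%N%:R => s Y M Y_ge Y_le M_small s_ge0.
have sthN_ge0 : 0 <= s * (th * N) by rewrite !mulr_ge0 // ltW.
have Y_ge0 := le_trans sthN_ge0 Y_ge.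
have := ler_pM sthN_ge0 sthN_ge0 Y_ge Y_ge; have := ler_pM Y_ge0 Y_ge0 Y_le Y_le.
have := ler_wpM2l (le_trans Y_ge0 Y_le) (ltW M_small) => MM YY sY.
have : 0 <= (N * N) * (12 * beta * M - th ^+ 2 * s ^+ 2) by rewrite !expr2; lra.
by rewrite pmulr_rge0 ?subr_ge0 ?mulr_gt0.
Qed.

Lemma max_cut_contra d : 0 < d -> d <= 2^-1 -> 768 * beta <= d ^+ 3 ->
  (max_book e)%:R < (4^-1 - d / 2) * N -> False.
Proof.
move=> d_gt0 d_le beta_le book_small.
have th_ge0 : 0 <= d / 4 by rewrite divr_ge0 // ltW.
have beta_th : 6 * beta <= (d / 4) ^+ 2.
  by have := ler_wpM2l (sqr_ge0 d) d_le; have := sqr_ge0 d; lra.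
have opp u : (2^-1 - d / 4) * N <= (opposite_size f u)%:R.
  by rewrite opposite_sizeE; apply: side_size_large.
have c_ge0 : 0 <= 4^-1 - d / 2 by lra.
have c_th : 4^-1 - d / 2 + 2 * (d / 4) <= 2^-1 - d / 4 by lra.
have lower := heavy_card_sq_ge opp book_small (ler0n R n) c_ge0 th_ge0 c_th edges_large.
have upper := heavy_card_sq_le th_ge0.
move: lower upper (ler0n R (\sum_u cross_nonadj f u)).
move: #|_|%:R (\sum_u _)%N%:R => s M lower upper M_ge0.
have := ler_wpM2l (sqr_ge0 (d / 4)) lower; have := ler_wpM2r M_ge0 beta_le.
have := mulr_ge0 (ltW d_gt0) (mulr_ge0 (sqr_ge0 (d / 4)) (sqr_ge0 s)).
have := mulr_ge0 (exprn_ge0 3 (ltW d_gt0)) M_ge0; have := mulr_gt0 d_gt0 d_gt0.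
lra.
Qed.

End FewTriangles.
End MaxCut.

End Graph.

Local Open Scope ring_scope.

Theorem theorem2 (R : realType) (alpha : R) :
  3^-1 < alpha -> alpha < 2^-1 ->
  exists beta : R, 0 < beta /\
    exists N : nat, forall n : nat, (N <= n)%N ->
      forall e : rel 'I_n, simple_graph e ->
        (((n * n) %/ 4).+1 <= num_edges e)%N ->
        (max_book e)%:R < alpha * n%:R / 2 ->
        beta * (n%:R ^+ 3) <= (num_triangles e)%:R.
Proof.
move=> alpha_gt alpha_lt; pose d := 2^-1 - alpha.
have d_gt0 : 0 < d by rewrite subr_gt0.
(* 768 = 12 * 4^3: the last step of [max_cut_contra] needs 12 beta <= (d/4)^3. *)
exists (d ^+ 3 / 768); split; first by rewrite divr_gt0 ?exprn_gt0.
exists 0%N => n _ e [e_sym e_irr] edges book; rewrite leNgt; apply/negP => few.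
pose f := [arg max_(g > [ffun=> false]) cut e g]%N.
have f_max g : (cut e g <= cut e f)%N by rewrite /f; case: arg_maxnP => // h _; exact.
apply: (max_cut_contra e_sym e_irr f_max edges few d_gt0); rewrite /d.
- by move: alpha_gt; lra.
- by lra.
- by move: book; lra.
Qed.
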